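(* Suppose the e-values are valid, i.e. $\mathbb{E}[e_t\mid\mathcal{F}_{t-1}]\le1$ a.s. whenever $\theta_t=0$. If the $\mathcal{F}_{t-1}$-measurable testing levels satisfy, almost surely for every $t\ge1$, $$\widehat{\mathrm{FDP}}^{\mathrm{LORD}}_{\mathrm{e}}(t):=\sum_{j=1}^t\frac{\alpha_j}{R_{j-1}+1}\le\alpha,$$ then $\mathrm{FDR}(t)\le\alpha$ for all $t\ge1$.
   Context: Let $\alpha\in(0,1)$ be a target level. Hypotheses are indexed by $t=1,2,\dots$; $\theta_t\in\{0,1\}$ is a fixed (non-random) indicator with $\theta_t=0$ iff the $t$-th null hypothesis is true. $e_1,e_2,\dots$ are nonnegative random variables (e-values). Testing levels $\alpha_1,\alpha_2,\dots$ are nonnegative random variables and the decisions are $\delta_t=\mathbb{1}\{e_t\ge 1/\alpha_t\}$ (with $\delta_t=0$ when $\alpha_t=0$). Let $\mathcal{F}_t=\sigma(\delta_1,\dots,\delta_t)$, $\mathcal{F}_0$ trivial; each $\alpha_t$ is required to be $\mathcal{F}_{t-1}$-measurable. $R_t=\sum_{j=1}^t\delta_j$, $R_0=0$. $\mathcal{H}_0(t)=\{j\le t:\theta_j=0\}$. $\mathrm{FDR}(t)=\mathbb{E}\big[\sum_{j\in\mathcal{H}_0(t)}\delta_j/(R_t\vee 1)\big]$. *)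

From HB Require Import structures.
From mathcomp Require Import all_boot all_order all_algebra.
From mathcomp Require Import all_classical all_reals all_analysis.
Set Implicit Arguments. Unset Strict Implicit. Unset Printing Implicit Defensive.
Import Order.TTheory GRing.Theory Num.Theory.
Local Open Scope classical_set_scope.
Local Open Scope ring_scope.

(* Hypotheses are indexed t = 1, 2, ...; index 0 of the sequences is unused. *)

Section Defs.
Context {d : measure_display} {T : measurableType d} {R : realType}.

(* delta_t = 1{ e_t >= 1/alpha_t }, with delta_t = 0 when alpha_t = 0 *)
Definition decision (e alpha : nat -> T -> R) (t : nat) (w : T) : bool :=
  (0 < alpha t w) && ((alpha t w)^-1 <= e t w).

Definition nrej (e alpha : nat -> T -> R) (t : nat) (w : T) : R :=
  \sum_(1 <= j < t.+1) (decision e alpha j w)%:R.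

Definition decvec (e alpha : nat -> T -> R) (t : nat) (w : T) : {ffun 'I_t -> bool} :=
  [ffun i : 'I_t => decision e alpha (nat_of_ord i).+1 w].

(* F_t = sigma(delta_1, ..., delta_t): since the delta_j are {0,1}-valued, this
   sigma-algebra is exactly the family of preimages of subsets of {0,1}^t.
   F_0 is the trivial sigma-algebra {emptyset, T}. *)
Definition filtration (e alpha : nat -> T -> R) (t : nat) : set (set T) :=
  [set A | exists B : set {ffun 'I_t -> bool}, A = decvec e alpha t @^-1` B].

Definition filt_measurable (e alpha : nat -> T -> R) (t : nat) (X : T -> R) : Prop :=
  forall B : set R, measurable B -> filtration e alpha t (X @^-1` B).

(* E[X | F_t] <= 1 a.s., for a nonnegative X, expressed by the defining property
   of conditional expectation: E[X 1_A] <= P(A) for every A in F_t. *)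
Definition cond_exp_le1 (P : probability T R) (e alpha : nat -> T -> R)
    (t : nat) (X : T -> R) : Prop :=
  forall A, filtration e alpha t A -> (\int[P]_(w in A) (X w)%:E <= P A)%E.

Definition FDPhat_LORD (e alpha : nat -> T -> R) (t : nat) (w : T) : R :=
  \sum_(1 <= j < t.+1) alpha j w / (nrej e alpha j.-1 w + 1).

(* false discovery proportion at time t; theta j = false iff H_j is a true null *)
Definition FDP (theta : nat -> bool) (e alpha : nat -> T -> R) (t : nat) (w : T) : R :=
  (\sum_(1 <= j < t.+1 | ~~ theta j) (decision e alpha j w)%:R)
    / Num.max (nrej e alpha t w) 1.

Definition FDR (P : probability T R) (theta : nat -> bool) (e alpha : nat -> T -> R)
    (t : nat) : \bar R :=
  'E_P[FDP theta e alpha t].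

End Defs.

From HB Require Import structures.
From mathcomp Require Import all_boot all_order all_algebra.
From mathcomp Require Import all_classical all_reals all_analysis.
From mathcomp Require Import measurable_realfun.
Import Order.TTheory GRing.Theory Num.Theory.
Local Open Scope classical_set_scope.
Local Open Scope ring_scope.

(* The false discovery proportion is bounded termwise: a true-null rejection
   at time j <= t contributes 1/(R_t v 1) <= 1/(R_{j-1} + 1) <= alpha_j e_j/(R_{j-1} + 1),
   since rejecting means alpha_j e_j >= 1.  The weight alpha_j/(R_{j-1} + 1) is
   F_{j-1}-measurable, and F_{j-1} is generated by the finite partition into
   atoms {(delta_1, ..., delta_{j-1}) = v}; on each atom the weight is constant,
   so validity of e_j gives E[weight * e_j] <= E[weight].  Summing over j bounds
   FDR(t) by the expectation of the LORD estimate, which is at most alpha. *)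

Section Decisions.
Set Implicit Arguments. Unset Strict Implicit.
Context {d : measure_display} {T : measurableType d} {R : realType}.
Variables (e alpha : nat -> T -> R).
Hypotheses (me : forall t, measurable_fun setT (e t))
           (malpha : forall t, measurable_fun setT (alpha t)).

Definition decvec_determined (n : nat) (f : T -> R) :=
  forall w w', decvec e alpha n w = decvec e alpha n w' -> f w = f w'.

Lemma decisionE j w :
  decision e alpha j w = (0 < alpha j w) && (1 <= alpha j w * e j w).
Proof.
rewrite /decision; have [alpha_gt0|] := ltP 0 (alpha j w) => //=.
by rewrite -[(alpha j w)^-1]mulr1 ler_pdivrMl.
Qed.

Lemma measurable_decision j : measurable_fun setT (decision e alpha j).
Proof.
rewrite (_ : decision e alpha j = fun w => (0 < alpha j w) && (1 <= alpha j w * e j w)).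
  apply: measurable_and.
    by apply: measurable_fun_ltr => //; exact: measurable_cst.
  apply: measurable_fun_ler; first exact: measurable_cst.
  exact: measurable_funM.
by apply/funext => w; rewrite decisionE.
Qed.

Lemma measurable_decisionR j :
  measurable_fun setT (fun w => (decision e alpha j w)%:R : R).
Proof.
rewrite (_ : (fun w => _) = fun w => if decision e alpha j w then 1 else 0).
  apply: measurable_fun_ifT; [exact: measurable_decision|exact: measurable_cst..].
by apply/funext => w; case: (decision _ _ _ _).
Qed.

Lemma measurable_decvec_atom n v : measurable (decvec e alpha n @^-1` [set v]).
Proof.
rewrite (_ : _ @^-1` _ =
    \bigcap_(i in [set: 'I_n]) (decision e alpha i.+1 @^-1` [set v i])).
  apply: fin_bigcap_measurable; first exact: finite_finset.
  by move=> i _; rewrite -[X in measurable X]setTI; apply: measurable_decision.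
apply/seteqP; split => w /=.
  by move=> <- i _; rewrite /= ffunE.
by move=> atom_w; apply/ffunP => i; rewrite ffunE; exact: atom_w.
Qed.

Lemma measurable_determined n f : decvec_determined n f -> measurable_fun setT f.
Proof.
move=> det_f _ B mB; rewrite setTI.
rewrite (_ : f @^-1` B =
    \bigcup_(v in [set v | exists w, decvec e alpha n w = v /\ B (f w)])
      (decvec e alpha n @^-1` [set v])).
  apply: fin_bigcup_measurable; first exact: finite_finset.
  by move=> v _; exact: measurable_decvec_atom.
apply/seteqP; split => w /=.
  by move=> Bw; exists (decvec e alpha n w) => //; exists w.
by move=> [v [w' [<- Bw']] /= ew]; rewrite (det_f _ _ ew).
Qed.

Lemma filt_measurable_determined n X :
  filt_measurable e alpha n X -> decvec_determined n X.
Proof.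
move=> mX w w' ew.
have [B preB] := mX [set X w] (measurable_set1 _).
have : (X @^-1` [set X w]) w by [].
by rewrite preB /= ew -[B _]/((decvec e alpha n @^-1` B) w') -preB => /= ->.
Qed.

Lemma nrej_decvec n w : nrej e alpha n w = \sum_(i < n) (decvec e alpha n w i)%:R.
Proof.
under [RHS]eq_bigr => i _ do rewrite ffunE.
by rewrite /nrej big_add1 /= big_mkord.
Qed.

Lemma nrej_determined n : decvec_determined n (nrej e alpha n).
Proof. by move=> w w' ew; rewrite !nrej_decvec ew. Qed.

Local Open Scope ereal_scope.

Lemma ge0_integral_decvec_atoms (mu : {measure set T -> \bar R}) n (f : T -> \bar R) :
  measurable_fun setT f -> (forall w, 0 <= f w) ->
  \int[mu]_w f w = \sum_(v <- enum {ffun 'I_n -> bool})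
                     \int[mu]_(w in decvec e alpha n @^-1` [set v]) f w.
Proof.
move=> mf f0.
have cover : [set: T] = \big[setU/set0]_(v <- enum {ffun 'I_n -> bool})
                          (decvec e alpha n @^-1` [set v]).
  rewrite -bigcup_seq; apply/seteqP; split => w // _.
  by exists (decvec e alpha n w) => //=; rewrite mem_enum.
rewrite cover ge0_integral_bigsetU ?enum_uniq -?cover //.
- exact: measurable_decvec_atom.
- by move=> u v _ _ [w [/= <- <-]].
Qed.

(* The discrete version of E[Y X] = E[Y E[X | F_n]] <= E[Y]: on each atom of
   F_n the factor Y is a constant. *)
Lemma integral_determined_mul_le (P : probability T R) n (X Y : T -> R) :
  measurable_fun setT X -> (forall w, (0 <= X w)%R) -> (forall w, (0 <= Y w)%R) ->
  decvec_determined n Y -> cond_exp_le1 P e alpha n X ->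
  \int[P]_w (Y w * X w)%:E <= \int[P]_w (Y w)%:E.
Proof.
move=> mX X0 Y0 det_Y valid_X.
have mY := measurable_determined det_Y.
have mYX : measurable_fun setT (fun w => (Y w * X w)%:E).
  by apply: measurableT_comp => //; exact: measurable_funM.
rewrite (ge0_integral_decvec_atoms P n mYX); last by move=> w; rewrite lee_fin mulr_ge0.
rewrite (ge0_integral_decvec_atoms P n (measurableT_comp _ mY)) //.
apply: lee_sum => v _; set A := decvec e alpha n @^-1` [set v].
have [[w0 Aw0]|A0] := pselect (exists w0, A w0); last first.
  have -> : A = set0 by apply/seteqP; split => w // Aw; apply: A0; exists w.
  by rewrite !integral_set0.
have Y_on_A w : w \in A -> Y w = Y w0.
  by rewrite inE => Aw; apply: det_Y; rewrite Aw Aw0.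
rewrite (eq_integral (fun w => (Y w0)%:E * (X w)%:E)); last first.
  by move=> w /Y_on_A ->; rewrite EFinM.
rewrite [leRHS](eq_integral (cst (Y w0)%:E)); last by move=> w /Y_on_A /= ->.
have mA : measurable A by exact: measurable_decvec_atom.
rewrite integral_cst ?ge0_integralZl_EFin //; first last.
- by apply: measurableT_comp => //; exact: measurable_funS mX.
- by move=> w _; rewrite lee_fin.
apply: lee_wpmul2l; first by rewrite lee_fin.
by apply: valid_X; exists [set v].
Qed.

End Decisions.

Section LORD.
Set Implicit Arguments. Unset Strict Implicit.
Context {d : measure_display} {T : measurableType d} {R : realType}.
Variables (e alpha : nat -> T -> R).
Hypotheses (me : forall t, measurable_fun setT (e t))
           (malpha : forall t, measurable_fun setT (alpha t))
           (e_ge0 : forall t w, 0 <= e t w) (alpha_ge0 : forall t w, 0 <= alpha t w).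

Definition lord_weight j w := alpha j w / (nrej e alpha j.-1 w + 1).

Lemma FDPhat_LORDE t w : FDPhat_LORD e alpha t w = \sum_(1 <= j < t.+1) lord_weight j w.
Proof. by []. Qed.

Lemma nrej_ge0 n w : 0 <= nrej e alpha n w.
Proof. exact: sumr_ge0. Qed.

Lemma lord_weight_ge0 j w : 0 <= lord_weight j w.
Proof. by rewrite divr_ge0 // addr_ge0 // nrej_ge0. Qed.

Lemma nrej_pred_add_decision j t w : (1 <= j <= t)%N ->
  nrej e alpha j.-1 w + (decision e alpha j w)%:R <= nrej e alpha t w.
Proof.
move=> /andP[j_ge1 j_le_t].
rewrite /nrej (@big_cat_nat _ _ _ j _ _ _ _ j_ge1 (leqW j_le_t)) /=.
rewrite prednK // lerD2l (@big_ltn _ _ _ j) ?ltnS // lerDl.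
exact: sumr_ge0.
Qed.

Lemma FDP_le_weighted_nulls theta t w :
  FDP theta e alpha t w <=
    \sum_(1 <= j < t.+1 | ~~ theta j) lord_weight j w * e j w.
Proof.
rewrite /FDP mulr_suml big_seq_cond [leRHS]big_seq_cond.
apply: ler_sum => j /andP[]; rewrite mem_index_iota => j_range _.
case rej: (decision e alpha j w); last first.
  by rewrite mul0r mulr_ge0 // lord_weight_ge0.
move: (rej); rewrite decisionE => /andP[alpha_gt0 alpha_e_ge1].
have := nrej_pred_add_decision w j_range; rewrite rej.
set N := nrej e alpha j.-1 w => N1_le.
have N1_gt0 : 0 < N + 1 by rewrite ltr_wpDl // nrej_ge0.
rewrite mul1r (@le_trans _ _ (N + 1)^-1) //.
  by rewrite lef_pV2 ?posrE ?(lt_le_trans N1_gt0) // le_max N1_le.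
by rewrite mulrAC -[leLHS]mul1r ler_wpM2r // invr_ge0 ltW.
Qed.

Lemma measurable_FDP theta t : measurable_fun setT (FDP theta e alpha t).
Proof.
apply: measurable_funM.
  rewrite (_ : (fun w => _) = fun w => \sum_(j <- index_iota 1 t.+1)
      (if ~~ theta j then (decision e alpha j w)%:R else 0)); last first.
    by apply/funext => w; rewrite big_mkcond.
  apply: measurable_sum => j; case: (theta j) => /=; first exact: measurable_cst.
  exact: measurable_decisionR.
apply: (measurable_determined me malpha (n := t)) => w w' ew.
by rewrite (nrej_determined ew).
Qed.

Lemma lord_weight_determined j :
  filt_measurable e alpha j.-1 (alpha j) -> decvec_determined e alpha j.-1 (lord_weight j).
Proof.
move=> /filt_measurable_determined det_alpha w w' ew.
by rewrite /lord_weight (det_alpha _ _ ew) (nrej_determined ew).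
Qed.

Lemma measurable_lord_weight j : measurable_fun setT (lord_weight j).
Proof.
apply: (measurable_funM (malpha j)).
apply: (measurable_determined me malpha (n := j.-1)) => w w' ew.
by rewrite (nrej_determined ew).
Qed.

Local Open Scope ereal_scope.

Lemma expect_FDP_le (P : probability T R) theta t :
  'E_P[FDP theta e alpha t] <=
    \sum_(1 <= j < t.+1 | ~~ theta j) \int[P]_w (lord_weight j w * e j w)%:E.
Proof.
have mwe j : measurable_fun setT (fun w => (lord_weight j w * e j w)%:E).
  by apply: measurableT_comp => //; exact: measurable_funM (measurable_lord_weight j) (me j).
have we_ge0 j w : 0 <= (lord_weight j w * e j w)%:E.
  by rewrite lee_fin mulr_ge0 // lord_weight_ge0.
rewrite unlock -big_filter -(ge0_integral_sum _ _ mwe) //.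
apply: ge0_le_integral => //.
- by move=> w _; rewrite lee_fin divr_ge0 ?sumr_ge0 // le_max ler01 orbT.
- exact: measurableT_comp (measurable_FDP theta t).
- exact: emeasurable_sum.
- by move=> w _; rewrite big_filter sumEFin lee_fin FDP_le_weighted_nulls.
Qed.

Lemma expect_FDPhat_LORD (P : probability T R) t :
  \int[P]_w (FDPhat_LORD e alpha t w)%:E =
    \sum_(1 <= j < t.+1) \int[P]_w (lord_weight j w)%:E.
Proof.
under eq_integral => w _ do rewrite FDPhat_LORDE -sumEFin.
apply: ge0_integral_sum => // [j|j w _].
- exact: measurableT_comp (measurable_lord_weight j).
- by rewrite lee_fin lord_weight_ge0.
Qed.

Lemma FDR_le_expect_FDPhat (P : probability T R) theta t :
  (forall j, (1 <= j)%N -> filt_measurable e alpha j.-1 (alpha j)) ->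
  (forall j, (1 <= j)%N -> theta j = false -> cond_exp_le1 P e alpha j.-1 (e j)) ->
  FDR P theta e alpha t <= \int[P]_w (FDPhat_LORD e alpha t w)%:E.
Proof.
move=> alpha_pred valid; apply: (le_trans (expect_FDP_le P theta t)).
rewrite expect_FDPhat_LORD big_mkcond big_seq [leRHS]big_seq.
apply: lee_sum => j; rewrite mem_index_iota => /andP[j_ge1 _].
case: ifPn => [null_j|_]; last by apply: integral_ge0 => w _; rewrite lee_fin lord_weight_ge0.
apply: (integral_determined_mul_le me malpha) => //.
- exact: lord_weight_ge0.
- exact: lord_weight_determined (alpha_pred j j_ge1).
- by apply: valid => //; exact: negbTE.
Qed.

End LORD.

Theorem proposition1 (d : measure_display) (T : measurableType d) (R : realType)
  (P : probability T R) (a : R) (theta : nat -> bool) (e alpha : nat -> T -> R) :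
  0 < a < 1 ->
  (forall t, measurable_fun setT (e t)) ->
  (forall t w, 0 <= e t w) ->
  (forall t, measurable_fun setT (alpha t)) ->
  (forall t w, 0 <= alpha t w) ->
  (forall t, (1 <= t)%N -> filt_measurable e alpha t.-1 (alpha t)) ->
  (forall t, (1 <= t)%N -> theta t = false -> cond_exp_le1 P e alpha t.-1 (e t)) ->
  {ae P, forall w, forall t, (1 <= t)%N -> FDPhat_LORD e alpha t w <= a} ->
  forall t, (1 <= t)%N -> (FDR P theta e alpha t <= a%:E)%E.
Proof.
move=> /andP[a_gt0 _] me e_ge0 malpha alpha_ge0 alpha_pred valid FDPhat_le t t_ge1.
apply: (le_trans (FDR_le_expect_FDPhat me malpha e_ge0 alpha_ge0 t alpha_pred valid)).
apply: (@le_trans _ _ (\int[P]_w (cst a%:E) w)%E); last first.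
  by rewrite integral_cst //; have /= -> := probability_setT P; rewrite mule1.
apply: ae_ge0_le_integral => //.
- by move=> w _; rewrite lee_fin sumr_ge0 // => j _; exact: lord_weight_ge0.
- apply: measurableT_comp => //; apply: measurable_sum => j.
  exact: measurable_lord_weight.
- by move=> w _; rewrite lee_fin ltW.
- by apply: filterS FDPhat_le => w le_a _; rewrite lee_fin le_a.
Qed.
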